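(* Let $R$ be a $*$-ring and let $R[i]=\{a+bi \mid a,b\in R\}$, where $i$ commutes with every element of $R$ and $i^2=-1$, equipped with the involution $(a+bi)^*=a^*+b^*i$. Then $R[i]$ is strongly $J$-$*$-clean if and only if $R$ is strongly $J$-$*$-clean.
   Context: All rings are associative with identity. A $*$-ring is a ring $R$ with an involution $*$, i.e. a map $a\mapsto a^*$ with $(a+b)^*=a^*+b^*$, $(ab)^*=b^*a^*$, $(a^* )^*=a$. $J(R)$ denotes the Jacobson radical of $R$. A projection is an element $e$ with $e^2=e=e^*$. A $*$-ring $R$ is strongly $J$-$*$-clean if every $a\in R$ can be written $a=e+u$ with $e$ a projection, $u\in J(R)$ and $ae=ea$. *)

From HB Require Import structures.
From mathcomp Require Import all_boot all_order all_algebra.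

Set Implicit Arguments.
Unset Strict Implicit.
Unset Printing Implicit Defensive.

Import GRing.Theory.
Local Open Scope ring_scope.

Definition is_involution (R : pzRingType) (star : R -> R) : Prop :=
  [/\ forall a b : R, star (a + b) = star a + star b,
      forall a b : R, star (a * b) = star b * star a
    & forall a : R, star (star a) = a].

Definition left_ideal (R : pzRingType) (I : R -> Prop) : Prop :=
  [/\ I 0,
      forall x y, I x -> I y -> I (x + y)
    & forall r x, I x -> I (r * x)].

Definition maximal_left_ideal (R : pzRingType) (I : R -> Prop) : Prop :=
  [/\ left_ideal I, ~ I 1 &
      forall K : R -> Prop, left_ideal K -> ~ K 1 ->
        (forall x, I x -> K x) -> forall x, K x -> I x].

Definition jacobson (R : pzRingType) (a : R) : Prop :=
  forall I : R -> Prop, maximal_left_ideal I -> I a.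

Definition projection (R : pzRingType) (star : R -> R) (e : R) : Prop :=
  e * e = e /\ star e = e.

Definition strongly_J_star_clean (R : pzRingType) (star : R -> R) : Prop :=
  forall a : R, exists e u : R,
    [/\ projection star e, jacobson u, a = e + u & a * e = e * a].

(* R[i] = { a + b i | a, b in R }, i central, i^2 = -1,                *)
(* represented by pairs (a, b) standing for a + b i.                  *)
Definition gauss (R : Type) : Type := (R * R)%type.

Section Gauss.
Variable R : pzRingType.

HB.instance Definition _ := GRing.Zmodule.on (gauss R).

Definition gauss_one : gauss R := (1, 0).
Definition gauss_mul (x y : gauss R) : gauss R :=
  (x.1 * y.1 - x.2 * y.2, x.1 * y.2 + x.2 * y.1).

Lemma gauss_mulA : associative gauss_mul.
Proof.
move=> [a b] [c d] [e f]; rewrite /gauss_mul /=; congr pair;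
  rewrite !(mulrDl, mulrDr, mulNr, mulrN, mulrA, opprD) -!addrA; congr (_ + _);
  by rewrite [RHS]addrC -addrA.
Qed.

Lemma gauss_mul1r : left_id gauss_one gauss_mul.
Proof.
by move=> [a b]; rewrite /gauss_mul /= !mul1r !mul0r subr0 addr0.
Qed.

Lemma gauss_mulr1 : right_id gauss_one gauss_mul.
Proof.
by move=> [a b]; rewrite /gauss_mul /= !mulr1 !mulr0 subr0 add0r.
Qed.

Lemma gauss_mulDl : left_distributive gauss_mul +%R.
Proof.
move=> [a b] [c d] [e f]; rewrite /gauss_mul /=.
congr pair => /=; rewrite !mulrDl ?opprD -!addrA; congr (_ + _);
  exact: addrCA.
Qed.

Lemma gauss_mulDr : right_distributive gauss_mul +%R.
Proof.
move=> [a b] [c d] [e f]; rewrite /gauss_mul /=.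
congr pair => /=; rewrite !mulrDr ?opprD -!addrA; congr (_ + _);
  exact: addrCA.
Qed.

HB.instance Definition _ := GRing.Zmodule_isPzRing.Build (gauss R)
  gauss_mulA gauss_mul1r gauss_mulr1 gauss_mulDl gauss_mulDr.

Definition gauss_star (star : R -> R) (x : gauss R) : gauss R :=
  (star x.1, star x.2).

Definition gauss_i : gauss R := (0, 1).

End Gauss.

From HB Require Import structures.
From mathcomp Require Import all_boot all_order all_algebra.
From mathcomp Require Import boolp classical_sets.

Set Implicit Arguments.
Unset Strict Implicit.
Unset Printing Implicit Defensive.

Import GRing.Theory.
Local Open Scope ring_scope.
Local Open Scope classical_set_scope.

(* Everything rests on two facts about a strongly J-*-clean ring. First, every
   idempotent is a projection (the J-part of its decomposition is a tripotent
   in J, hence 0), so every projection e is central: e + e r (1 - e) is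
   idempotent, hence self-adjoint, which kills e r (1 - e). Second, 2 lies in
   J, since -1 = e + u gives 2 = (2 - e)(1 + e) with 1 + e = -u.
   For a + b i, decompose a - b = f + u in R; then a + b i = f + (u + b (1 + i)),
   where 1 + i is central with square 2 i, hence in J(R[i]). Conversely, the
   projection in a decomposition of a in R[i] is central, and 2 in J forces its
   imaginary part to vanish. Membership in J is handled through left
   quasi-regularity, whose equivalence with the definition by maximal left
   ideals uses Zorn's lemma. *)

Section Jacobson.
Variable R : pzRingType.
Implicit Types (a b v w x y r : R) (A L : set R).

Lemma left_ideal_bigcup (F : set (set R)) A0 :
  F A0 -> total_on F subset -> (forall A, F A -> left_ideal A) ->
  left_ideal (\bigcup_(A in F) A).
Proof.
move=> FA0 Ftot Fideal; split.
- by exists A0 => //; case: (Fideal _ FA0).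
- move=> x y [A FA Ax] [B FB By].
  have [AB|BA] := Ftot _ _ FA FB.
  + by exists B => //; case: (Fideal _ FB) => _ + _; apply; first exact: AB.
  + by exists A => //; case: (Fideal _ FA) => _ + _; apply; last exact: BA.
- by move=> r x [A FA Ax]; exists A => //; case: (Fideal _ FA) => _ _; apply.
Qed.

Lemma maximal_left_ideal_ext L :
  left_ideal L -> ~ L 1 -> exists2 I, maximal_left_ideal I & L `<=` I.
Proof.
move=> Lideal L1.
pose T := {A | [/\ left_ideal A, ~ A 1 & L `<=` A]}.
pose le (s t : T) := `[< sval s `<=` sval t >].
pose L' : T := exist _ L (And3 Lideal L1 (@subset_refl _ L)).
have [|||[I [Iideal I1 LI]] Imax] := @ZL_preorder T L' le.
- by move=> t; apply/asboolP.
- by move=> r s t /asboolP rs /asboolP st; apply/asboolP; exact: subset_trans st.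
- move=> F Ftot; have [[s0 Fs0]|F0] := pselect (exists s0, F s0); last first.
    by exists L' => s Fs; case: F0; exists s.
  pose G := sval @` F.
  have Gtot : total_on G subset.
    move=> _ _ [s Fs <-] [t Ft <-].
    by have [/asboolP|/asboolP] := Ftot _ _ Fs Ft; [left|right].
  have Gideal : left_ideal (\bigcup_(A in G) A).
    apply: (left_ideal_bigcup (A0 := sval s0)) => [|//|_ [s _ <-]].
    - by exists s0.
    - by case: (svalP s).
  have G1 : ~ (\bigcup_(A in G) A) 1 by case=> _ [s _ <-]; case: (svalP s).
  have LG : L `<=` \bigcup_(A in G) A.
    by move=> x Lx; exists (sval s0); [exists s0|case: (svalP s0) => _ _; apply].
  exists (exist _ (\bigcup_(A in G) A) (And3 Gideal G1 LG)) => s Fs.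
  apply/asboolP => x sx.
  by exists (sval s) => //; exists s.
exists I => //; split=> // K Kideal K1 IK.
pose K' : T := exist _ K (And3 Kideal K1 (subset_trans LI IK)).
have /Imax /asboolP // : le (exist _ I (And3 Iideal I1 LI)) K'.
exact/asboolP.
Qed.

Lemma jacobson_linv x : jacobson x -> forall r, exists v, v * (1 - r * x) = 1.
Proof.
move=> Jx r; apply: contrapT => noinv.
pose L y := exists s, y = s * (1 - r * x).
have Lideal : left_ideal L.
  split; first by exists 0; rewrite mul0r.
  - by move=> _ _ [s ->] [t ->]; exists (s + t); rewrite mulrDl.
  - by move=> s _ [t ->]; exists (s * t); rewrite mulrA.
have L1 : ~ L 1 by case=> s s1; apply: noinv; exists s.
have [I Imax LI] := maximal_left_ideal_ext Lideal L1.
have [[_ Iadd Imul] I1 _] := Imax.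
apply: I1; rewrite -(subrK (r * x) 1); apply: Iadd.
- by apply: LI; exists 1; rewrite mul1r.
- by apply: Imul; apply: Jx.
Qed.

Lemma linv_jacobson x : (forall r, exists v, v * (1 - r * x) = 1) -> jacobson x.
Proof.
move=> linv I [[I0 Iadd Imul] I1 Imax]; apply: contrapT => Ix.
pose K y := exists i r, I i /\ y = i + r * x.
have Kideal : left_ideal K.
  split; first by exists 0, 0; rewrite mul0r addr0.
  - move=> _ _ [i [r [Ii ->]]] [j [s [Ij ->]]]; exists (i + j), (r + s).
    by split; [exact: Iadd | rewrite mulrDl addrACA].
  - move=> s _ [i [r [Ii ->]]]; exists (s * i), (s * r).
    by split; [exact: Imul | rewrite mulrDr mulrA].
have [[i [r [Ii i_r]]]|K1] := pselect (K 1).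
  have [v v_r] := linv r; apply: I1; rewrite -v_r; apply: Imul.
  by rewrite i_r addrK.
apply: Ix; apply: (Imax K) => // [y Iy|]; first by exists y, 0; rewrite mul0r addr0.
by exists 0, 1; rewrite mul1r add0r.
Qed.

Lemma mulr_linv a b v w : v * a = 1 -> w * b = 1 -> w * v * (a * b) = 1.
Proof. by move=> va wb; rewrite mulrA -(mulrA w) va mulr1 wb. Qed.

Lemma jacobson_add x y : jacobson x -> jacobson y -> jacobson (x + y).
Proof.
by move=> Jx Jy I Imax; have [[_ Iadd _] _ _] := Imax; exact: Iadd (Jx _ _) (Jy _ _).
Qed.

Lemma jacobson_mull r x : jacobson x -> jacobson (r * x).
Proof. by move=> Jx I Imax; have [[_ _ Imul] _ _] := Imax; apply: Imul; exact: Jx. Qed.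

Lemma jacobson_unit x : jacobson x -> exists w, w * (1 - x) = 1 /\ (1 - x) * w = 1.
Proof.
move=> Jx; have [v v_x] := jacobson_linv Jx 1; rewrite mul1r in v_x.
have [w w_v] := jacobson_linv Jx (- v).
have {w_v}w_v : w * v = 1.
  by rewrite -w_v mulNr opprK -[in RHS]v_x mulrBr mulr1 subrK.
exists v; split=> //.
by rewrite -[LHS]mul1r -[X in X * _]w_v -mulrA (mulrA v) v_x mul1r.
Qed.

Lemma jacobson_tripotent_eq0 x : jacobson x -> x * x * x = x -> x = 0.
Proof.
move=> Jx xxx; have [v v_x] := jacobson_linv Jx x.
by rewrite -[x]mul1r -v_x -mulrA mulrBl mul1r xxx subrr mulr0.
Qed.

Lemma jacobson_central_sq x :
  (forall r, r * x = x * r) -> jacobson (x * x) -> jacobson x.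
Proof.
move=> xC Jxx; apply: linv_jacobson => r.
have [w w_r] := jacobson_linv Jxx (r * r).
exists (w * (1 + r * x)); rewrite -mulrA -[RHS]w_r; congr (w * _).
rewrite mulrDl mul1r mulrBr mulr1 addrA subrK -!mulrA.
by rewrite (mulrA x r) -xC !mulrA.
Qed.

End Jacobson.

Lemma commuting_idempotents_sub_tripotent (R : pzRingType) (g f : R) :
  g * g = g -> f * f = f -> g * f = f * g ->
  (g - f) * (g - f) * (g - f) = g - f.
Proof.
move=> gg ff gf; have gfg : g * f * g = g * f by rewrite -mulrA -gf mulrA gg.
have gff : g * f * f = g * f by rewrite -mulrA ff.
have dd : (g - f) * (g - f) = g - g * f - (g * f - f).
  by rewrite mulrBl !mulrBr gg ff gf.
by rewrite dd !(mulrBl, mulrBr) gg ff gfg gff -gf !subrr subr0 sub0r opprK addrA subrK.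
Qed.

Section StarRing.
Variables (R : pzRingType) (star : R -> R).
Hypothesis star_invol : is_involution star.
Implicit Types (e g r x : R).

Lemma starD x y : star (x + y) = star x + star y. Proof. by case: star_invol. Qed.
Lemma starM x y : star (x * y) = star y * star x. Proof. by case: star_invol. Qed.
Lemma starK x : star (star x) = x. Proof. by case: star_invol. Qed.

Lemma star0 : star 0 = 0.
Proof. by apply: (addrI (star 0)); rewrite -starD !addr0. Qed.

Lemma starN x : star (- x) = - star x.
Proof. by apply: (addrI (star x)); rewrite -starD !subrr star0. Qed.

Lemma star1 : star 1 = 1.
Proof. by have := starM 1 (star 1); rewrite mul1r !starK mul1r. Qed.

Lemma projection_compl e : projection star e -> projection star (1 - e).
Proof.
case=> ee se; split; last by rewrite starD starN star1 se.
by rewrite mulrBr mulr1 mulrBl mul1r ee subrr subr0.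
Qed.

Section SelfAdjointIdempotents.
Hypothesis idempotent_self_adjoint : forall g, g * g = g -> star g = g.

Lemma projection_mul_compl e r : projection star e -> e * r * (1 - e) = 0.
Proof.
case=> ee se; set x := e * r * (1 - e).
have e_ce : e * (1 - e) = 0 by rewrite mulrBr mulr1 ee subrr.
have ce_e : (1 - e) * e = 0 by rewrite mulrBl mul1r ee subrr.
have ex : e * x = x by rewrite /x !mulrA ee.
have xe : x * e = 0 by rewrite /x -mulrA ce_e mulr0.
have xx : x * x = 0 by rewrite -{2}ex mulrA xe mul0r.
have ex_idem : (e + x) * (e + x) = e + x.
  by rewrite mulrDl !mulrDr ee ex xe xx !addr0.
have sx : star x = x.
  by apply: (addrI e); rewrite -[X in X + _]se -starD idempotent_self_adjoint.
by rewrite -ex -sx /x !starM se (starD 1) starN star1 se !mulrA e_ce !mul0r.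
Qed.

Lemma projection_central e : projection star e -> forall r, e * r = r * e.
Proof.
move=> pe r; have := projection_mul_compl r pe.
rewrite mulrBr mulr1 => /subr0_eq ->.
have := projection_mul_compl r (projection_compl pe).
by rewrite subKr !mulrBl !mul1r => /subr0_eq.
Qed.

End SelfAdjointIdempotents.

Section StronglyJStarClean.
Hypothesis sjsc : strongly_J_star_clean star.

Lemma sjsc_idempotent_self_adjoint g : g * g = g -> star g = g.
Proof.
move=> gg; have [f [u [[ff sf] Ju g_fu gf]]] := sjsc g.
have u_gf : u = g - f by rewrite g_fu [f + u]addrC addrK.
suff u0 : u = 0 by rewrite g_fu u0 addr0.
apply: jacobson_tripotent_eq0 => //.
by rewrite u_gf commuting_idempotents_sub_tripotent.
Qed.

Lemma sjsc_projection_central e : projection star e -> forall r, e * r = r * e.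
Proof. exact/projection_central/sjsc_idempotent_self_adjoint. Qed.

Lemma sjsc_jacobson2 : jacobson (2 : R).
Proof.
have [e [u [[ee _] Ju m1_eu _]]] := sjsc (-1).
have J1e : jacobson (1 + e).
  have -> : 1 + e = - 1 * u.
    by apply/eqP; rewrite mulN1r -subr_eq0 opprK -addrA -m1_eu subrr.
  exact: jacobson_mull.
have -> : 2 = (2 - e) * (1 + e) :> R.
  by rewrite mulrDr mulr1 mulrBl ee mulr_natl !mulr2n addrK subrK.
exact: jacobson_mull.
Qed.

End StronglyJStarClean.
End StarRing.

Section Gauss.
Variable R : pzRingType.
Implicit Types (p q : R) (x y : gauss R).

Lemma gauss_mulE x y : x * y = (x.1 * y.1 - x.2 * y.2, x.1 * y.2 + x.2 * y.1).
Proof. by []. Qed.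

Lemma gauss_star_involution (star : R -> R) :
  is_involution star -> is_involution (gauss_star star : gauss R -> gauss R).
Proof.
move=> invol; split=> [[a b] [c d]|[a b] [c d]|[a b]]; rewrite /gauss_star /=.
- by rewrite !starD.
- by rewrite !(starD invol, starM invol, starN invol) [star d * _ + _]addrC.
- by rewrite !starK.
Qed.

Lemma gauss_oneE : (1 : gauss R) = (1, 0). Proof. by []. Qed.

Lemma gauss_addE x y : x + y = (x.1 + y.1, x.2 + y.2). Proof. by []. Qed.

Lemma gauss_subE x y : x - y = (x.1 - y.1, x.2 - y.2). Proof. by []. Qed.

Lemma jacobson_gauss_of_real p : jacobson p -> jacobson ((p, 0) : gauss R).
Proof.
move=> Jp; apply: linv_jacobson => -[s t].
have [w [w_sp sp_w]] := jacobson_unit (jacobson_mull s Jp).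
set q := w * (t * p).
have Jq : jacobson q by rewrite /q mulrA; apply: jacobson_mull.
have [z] := jacobson_linv Jq (- q); rewrite mulNr opprK => z_q.
(* with w = (1 - s p)^-1 and q = w t p, 1 - (s + t i) p = (1 - s p)(1 - q i) *)
have factor : 1 - ((s, t) : gauss R) * (p, 0) = ((1 - s * p, 0) : gauss R) * (1, - q).
  rewrite gauss_oneE gauss_subE !gauss_mulE /= !mulr0 !mul0r !mulr1 !subr0 !add0r.
  by rewrite addr0 mulrN /q mulrA sp_w mul1r.
have A_inv : ((w, 0) : gauss R) * (1 - s * p, 0) = 1.
  by rewrite gauss_mulE /= w_sp !mulr0 !mul0r subr0 addr0.
have B_inv : ((z, 0) : gauss R) * (1, q) * (1, - q) = 1.
  rewrite -mulrA [((1, q) : gauss R) * _]gauss_mulE /= !mulr1 !mul1r mulrN opprK addNr.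
  by rewrite gauss_mulE /= z_q !mulr0 !mul0r subr0 addr0.
by exists (((z, 0) : gauss R) * (1, q) * (w, 0)); rewrite factor; apply: mulr_linv.
Qed.

Lemma jacobson_real_of_gauss p : jacobson ((p, 0) : gauss R) -> jacobson p.
Proof.
move=> Jp; apply: linv_jacobson => r.
have [v /(congr1 fst)] := jacobson_linv Jp (r, 0).
rewrite gauss_oneE gauss_subE !gauss_mulE /= !mulr0 !mul0r !addr0 !subr0 mulr0 subr0.
by exists v.1.
Qed.

Lemma jacobson_one_plus_i : jacobson (2 : R) -> jacobson ((1, 1) : gauss R).
Proof.
move=> J2; apply: jacobson_central_sq => [[r s]|].
  by rewrite !gauss_mulE /= !mulr1 !mul1r [s + r]addrC.
have -> : ((1, 1) : gauss R) * (1, 1) = gauss_i R * (2, 0).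
  by rewrite /gauss_i !gauss_mulE /= !mulr1 !mul1r !mulr0 !mul0r !subrr add0r.
by apply: jacobson_mull; apply: jacobson_gauss_of_real.
Qed.

Lemma gauss_central_idempotent_im0 (e : gauss R) :
  jacobson (2 : R) -> e * e = e -> (forall y, e * y = y * e) -> e.2 = 0.
Proof.
case: e => [e1 e2] J2 ee eC.
have e1C r : e1 * r = r * e1.
  by have /(congr1 fst) := eC (r, 0); rewrite !gauss_mulE /= !mulr0 !mul0r !subr0.
have /(congr1 snd) := ee; rewrite gauss_mulE /= e1C -mulrDl => e2E.
have [v v_2] := jacobson_linv J2 e1.
rewrite -[e2]mul1r -v_2 -mulrA mulrBl mul1r mulr_natr mulr2n mulrDl e1C -mulrDl.
by rewrite e2E subrr mulr0.
Qed.

Section GaussStar.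
Variable star : R -> R.
Hypothesis star_invol : is_involution star.
Let gstar : gauss R -> gauss R := gauss_star star.

Lemma sjsc_of_gauss : strongly_J_star_clean gstar -> strongly_J_star_clean star.
Proof.
move=> sjsc a; have ginvol := gauss_star_involution star_invol.
have J2 : jacobson (2 : R).
  have := sjsc_jacobson2 sjsc; rewrite mulr2n gauss_addE /= addr0.
  exact: jacobson_real_of_gauss.
have [[e e'] [u [[ee se] Ju a_eu ae]]] := sjsc (a, 0).
have EC := sjsc_projection_central ginvol sjsc (conj ee se).
have /= e'0 := gauss_central_idempotent_im0 J2 ee EC.
subst e'; have u_a : u = ((a, 0) : gauss R) - (e, 0).
  by rewrite a_eu [_ + u]addrC addrK.
exists e, (a - e); split.
- split; first by have /(congr1 fst) := ee; rewrite gauss_mulE /= mulr0 subr0.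
  by have /(congr1 fst) := se.
- by move: Ju; rewrite u_a gauss_subE /= subr0; apply: jacobson_real_of_gauss.
- by rewrite addrC subrK.
- by have /(congr1 fst) := ae; rewrite !gauss_mulE /= !mulr0 !subr0.
Qed.

Lemma sjsc_gauss : strongly_J_star_clean star -> strongly_J_star_clean gstar.
Proof.
move=> sjsc [a b]; have [f [u [[ff sf] Ju ab_fu _]]] := sjsc (a - b).
have fC := sjsc_projection_central star_invol sjsc (conj ff sf).
exists (f, 0), (a - f, b); split.
- split; first by rewrite gauss_mulE /= ff !mulr0 !mul0r subr0 addr0.
  by rewrite /gstar /gauss_star /= sf star0.
- have -> : ((a - f, b) : gauss R) = (u, 0) + ((b, 0) : gauss R) * (1, 1).
    rewrite gauss_addE gauss_mulE /= !mulr1 subr0 addr0 add0r.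
    by rewrite -[a](subrK b) ab_fu [f + u]addrC addrAC addrK.
  apply: jacobson_add; first exact: jacobson_gauss_of_real.
  by apply: jacobson_mull; apply: jacobson_one_plus_i; apply: sjsc_jacobson2 sjsc.
- by rewrite gauss_addE /= add0r addrC subrK.
- by rewrite !gauss_mulE /= !mulr0 !mul0r subr0 addr0 subr0 add0r (fC a) (fC b).
Qed.

End GaussStar.
End Gauss.

Theorem proposition4p2 (R : pzRingType) (star : R -> R) :
  is_involution star ->
  (strongly_J_star_clean (gauss_star star : gauss R -> gauss R) <->
   strongly_J_star_clean star).
Proof. by move=> invol; split; [apply: sjsc_of_gauss | apply: sjsc_gauss]. Qed.
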